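(* In the real Euclidean plane, let $l_a,l_b,l_c,l_1,l_2,l_3,l_4$ be seven directed lines such that for each $i\in\{1,2,3,4\}$ the line $l_i$ meets each of $l_a,l_b,l_c$ in exactly one point, and put $A_i=l_a\cap l_i$, $B_i=l_b\cap l_i$, $C_i=l_c\cap l_i$. Then, with signed segment lengths, $$\begin{aligned} &A_1A_3\cdot A_2C_2\cdot A_4C_4\cdot B_1C_1\cdot B_2B_4\cdot B_3C_3+A_2A_4\cdot A_1C_1\cdot A_3C_3\cdot B_1B_3\cdot B_2C_2\cdot B_4C_4\\ &=A_3A_4\cdot A_1C_1\cdot A_2C_2\cdot B_1B_2\cdot B_3C_3\cdot B_4C_4+A_2A_3\cdot A_1C_1\cdot A_4C_4\cdot B_1B_4\cdot B_2C_2\cdot B_3C_3\\ &\quad+A_1A_2\cdot A_3C_3\cdot A_4C_4\cdot B_1C_1\cdot B_2C_2\cdot B_3B_4+A_1A_4\cdot A_2C_2\cdot A_3C_3\cdot B_1C_1\cdot B_2B_3\cdot B_4C_4. \end{aligned}$$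
   Context: Each segment $PQ$ appearing above lies on one of the directed lines: $A_iA_j$ on $l_a$, $B_iB_j$ on $l_b$, and $A_iC_i$, $B_iC_i$ on $l_i$. Its signed length $PQ$ equals $|PQ|$ if the direction from $P$ to $Q$ agrees with the direction of the line it lies on, and $-|PQ|$ otherwise (and $0$ if $P=Q$). *)

From HB Require Import structures.
From mathcomp Require Import all_boot all_order all_algebra.
Set Implicit Arguments. Unset Strict Implicit. Unset Printing Implicit Defensive.
Import Order.TTheory GRing.Theory Num.Theory.
Local Open Scope ring_scope.

Definition point (R : rcfType) := (R * R)%type.

Record dline (R : rcfType) := DLine {
  base : point R;
  dir : point R;
  dir_nz : dir != (0, 0)
}.

Definition on_line (R : rcfType) (l : dline R) (P : point R) : Prop :=
  exists t : R, P = ((base l).1 + t * (dir l).1, (base l).2 + t * (dir l).2).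

Definition meet_once (R : rcfType) (l m : dline R) : Prop :=
  exists P : point R, on_line l P /\ on_line m P /\
    forall Q : point R, on_line l Q -> on_line m Q -> Q = P.

Definition vnorm (R : rcfType) (v : point R) : R := Num.sqrt (v.1 ^+ 2 + v.2 ^+ 2).

Definition slen (R : rcfType) (l : dline R) (P Q : point R) : R :=
  let v := (Q.1 - P.1, Q.2 - P.2) in
  if v == (0, 0) then 0
  else if 0 < v.1 * (dir l).1 + v.2 * (dir l).2 then vnorm v else - vnorm v.

From HB Require Import structures.
From mathcomp Require Import all_boot all_order all_algebra.
From mathcomp Require Import ring.
Import Order.TTheory GRing.Theory Num.Theory.
Local Open Scope ring_scope.
Set Implicit Arguments. Unset Strict Implicit.

(* Parametrize A_i = a + s_i u on l_a and B_i = b + t_i v on l_b. Every signed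
   length is a parameter difference times the norm of the direction of its line.
   For A_i C_i the parameter difference along l_i, multiplied by the cross
   product of the directions of l_i and l_c, equals the (scaled) signed distance
   from A_i to l_c, which is affine in s_i; likewise for B_i C_i. Hence
   A_iC_i = (p - q s_i) w_i and B_iC_i = (p' - q' t_i) w_i with a common weight
   w_i, and the identity becomes a polynomial identity in the s_i and t_i. *)

Section SignedLengths.

Variable R : rcfType.
Implicit Types (l m : dline R) (P Q : point R).

Definition lpoint l (t : R) : point R :=
  ((base l).1 + t * (dir l).1, (base l).2 + t * (dir l).2).

Definition cross (u v : point R) : R := u.1 * v.2 - u.2 * v.1.

(* [|dir m|] times the signed distance from P to m *)
Definition offset m P : R :=
  cross ((base m).1 - P.1, (base m).2 - P.2) (dir m).

Lemma on_line_params (I : finType) m (P : I -> point R) :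
  (forall i, on_line m (P i)) ->
  exists s : I -> R, forall i, P i = lpoint m (s i).
Proof. exact: (@fin_all_exists _ (fun=> R) (fun i s => P i = lpoint m s)). Qed.

Lemma dir_norm2_gt0 l : 0 < (dir l).1 ^+ 2 + (dir l).2 ^+ 2.
Proof.
move: (dir_nz l); case: (dir l) => d1 d2 /=; rewrite xpair_eqE => d_neq0.
by rewrite lt0r addr_ge0 ?sqr_ge0 // andbT paddr_eq0 ?sqr_ge0 // !sqrf_eq0.
Qed.

Lemma vnorm_scale (k : R) (u : point R) :
  vnorm (k * u.1, k * u.2) = `|k| * vnorm u.
Proof.
by rewrite /vnorm /= !exprMn -mulrDr sqrtrM ?sqr_ge0 // sqrtr_sqr.
Qed.

Lemma slen_scale l P Q (k : R) :
  Q.1 - P.1 = k * (dir l).1 -> Q.2 - P.2 = k * (dir l).2 ->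
  slen l P Q = k * vnorm (dir l).
Proof.
rewrite /slen => -> ->; have [->|k_neq0] := eqVneq k 0.
  by rewrite !mul0r eqxx.
have -> : (k * (dir l).1, k * (dir l).2) == (0, 0) = false.
  apply/negbTE; move: (dir_nz l); rewrite !xpair_eqE !mulf_eq0.
  by rewrite (negbTE k_neq0).
have -> : k * (dir l).1 * (dir l).1 + k * (dir l).2 * (dir l).2
          = ((dir l).1 ^+ 2 + (dir l).2 ^+ 2) * k by ring.
rewrite pmulr_rgt0 ?dir_norm2_gt0 // vnorm_scale.
case: (ltrP 0 k) => k0; first by rewrite gtr0_norm.
by rewrite ler0_norm // mulNr opprK.
Qed.

Lemma slen_lpoint l (s t : R) :
  slen l (lpoint l s) (lpoint l t) = (t - s) * vnorm (dir l).
Proof. by apply: slen_scale => /=; ring. Qed.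

Lemma offset_lpoint m l (t : R) :
  offset m (lpoint l t) = offset m (base l) - cross (dir l) (dir m) * t.
Proof. by rewrite /offset /cross /=; ring. Qed.

Lemma offset_on_line m P : on_line m P -> offset m P = 0.
Proof. by case=> t ->; rewrite /offset /cross /=; ring. Qed.

Lemma meet_once_cross_neq0 l m : meet_once l m -> cross (dir l) (dir m) != 0.
Proof.
case=> [[p1 p2] [[u Pl] [[v Pm] uniqP]]]; apply/eqP => cross0.
pose n := (dir m).1 ^+ 2 + (dir m).2 ^+ 2.
have n_neq0 : n != 0 by rewrite gt_eqF ?dir_norm2_gt0.
(* with a vanishing cross product, dir l = k * dir m for the projection ratio k *)
pose k := ((dir l).1 * (dir m).1 + (dir l).2 * (dir m).2) / n.
have dl1 : (dir l).1 = k * (dir m).1.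
  have e : (dir l).1 * n = k * n * (dir m).1 + cross (dir l) (dir m) * (dir m).2.
    by rewrite /k divfK // /cross /n; ring.
  by apply: (mulIf n_neq0); rewrite e cross0 mul0r addr0 mulrAC.
have dl2 : (dir l).2 = k * (dir m).2.
  have e : (dir l).2 * n = k * n * (dir m).2 - cross (dir l) (dir m) * (dir m).1.
    by rewrite /k divfK // /cross /n; ring.
  by apply: (mulIf n_neq0); rewrite e cross0 mul0r subr0 mulrAC.
have [] : (p1 + (dir l).1, p2 + (dir l).2) = (p1, p2).
  apply: uniqP.
    by exists (u + 1); case: Pl => -> ->; congr pair; ring.
  by exists (v + k); case: Pm => -> ->; rewrite dl1 dl2; congr pair; ring.
rewrite -{2}[p1]addr0 -{2}[p2]addr0 => /addrI d1_0 /addrI d2_0.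
by move: (dir_nz l); rewrite [dir l]surjective_pairing d1_0 d2_0 eqxx.
Qed.

Lemma slen_to_line l m P Q :
  cross (dir l) (dir m) != 0 -> on_line l P -> on_line l Q -> on_line m Q ->
  slen l P Q = offset m P * (vnorm (dir l) / cross (dir l) (dir m)).
Proof.
move=> c_neq0 [u ->] [v ->] /offset_on_line.
rewrite -!/(lpoint l _) slen_lpoint !offset_lpoint => offset0.
rewrite mulrA; apply: (mulIf c_neq0); rewrite divfK //.
have -> : offset m (base l) = cross (dir l) (dir m) * v.
  by apply/eqP; rewrite -subr_eq0 offset0.
ring.
Qed.

End SignedLengths.

(* Each of the six products contains exactly one of AC i, BC i for every i, so
   the weights w i factor out. *)
Lemma six_term_identity (R : comPzRingType) (a b c d ka kb : R)
    (s t w : 'I_4 -> R) (i1 i2 i3 i4 : 'I_4) :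
  let AA i j := (s j - s i) * ka in
  let BB i j := (t j - t i) * kb in
  let AC i := (a - b * s i) * w i in
  let BC i := (c - d * t i) * w i in
  AA i1 i3 * AC i2 * AC i4 * BC i1 * BB i2 i4 * BC i3
  + AA i2 i4 * AC i1 * AC i3 * BB i1 i3 * BC i2 * BC i4
  = AA i3 i4 * AC i1 * AC i2 * BB i1 i2 * BC i3 * BC i4
  + AA i2 i3 * AC i1 * AC i4 * BB i1 i4 * BC i2 * BC i3
  + AA i1 i2 * AC i3 * AC i4 * BC i1 * BC i2 * BB i3 i4
  + AA i1 i4 * AC i2 * AC i3 * BC i1 * BB i2 i3 * BC i4.
Proof. by move=> /=; ring. Qed.

Theorem theorem11 (R : rcfType) (la lb lc : dline R) (l : 'I_4 -> dline R)
    (A B C : 'I_4 -> point R) :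
  (forall i, meet_once (l i) la /\ meet_once (l i) lb /\ meet_once (l i) lc) ->
  (forall i, on_line la (A i) /\ on_line (l i) (A i)) ->
  (forall i, on_line lb (B i) /\ on_line (l i) (B i)) ->
  (forall i, on_line lc (C i) /\ on_line (l i) (C i)) ->
  let AA i j := slen la (A i) (A j) in
  let BB i j := slen lb (B i) (B j) in
  let AC i := slen (l i) (A i) (C i) in
  let BC i := slen (l i) (B i) (C i) in
  let i1 : 'I_4 := inord 0 in let i2 : 'I_4 := inord 1 in
  let i3 : 'I_4 := inord 2 in let i4 : 'I_4 := inord 3 in
  AA i1 i3 * AC i2 * AC i4 * BC i1 * BB i2 i4 * BC i3
  + AA i2 i4 * AC i1 * AC i3 * BB i1 i3 * BC i2 * BC i4
  = AA i3 i4 * AC i1 * AC i2 * BB i1 i2 * BC i3 * BC i4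
  + AA i2 i3 * AC i1 * AC i4 * BB i1 i4 * BC i2 * BC i3
  + AA i1 i2 * AC i3 * AC i4 * BC i1 * BC i2 * BB i3 i4
  + AA i1 i4 * AC i2 * AC i3 * BC i1 * BB i2 i3 * BC i4.
Proof.
move=> Hmeet HA HB HC AA BB AC BC i1 i2 i3 i4.
have [s As] := on_line_params (fun i => (HA i).1).
have [t Bt] := on_line_params (fun i => (HB i).1).
have hAA i j : AA i j = (s j - s i) * vnorm (dir la).
  by rewrite /AA !As slen_lpoint.
have hBB i j : BB i j = (t j - t i) * vnorm (dir lb).
  by rewrite /BB !Bt slen_lpoint.
pose w i := vnorm (dir (l i)) / cross (dir (l i)) (dir lc).
have hAC i : AC i = (offset lc (base la) - cross (dir la) (dir lc) * s i) * w i.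
  have cross_neq0 := meet_once_cross_neq0 (Hmeet i).2.2.
  rewrite /AC (slen_to_line cross_neq0 (HA i).2 (HC i).2 (HC i).1).
  by rewrite As offset_lpoint.
have hBC i : BC i = (offset lc (base lb) - cross (dir lb) (dir lc) * t i) * w i.
  have cross_neq0 := meet_once_cross_neq0 (Hmeet i).2.2.
  rewrite /BC (slen_to_line cross_neq0 (HB i).2 (HC i).2 (HC i).1).
  by rewrite Bt offset_lpoint.
rewrite !hAA !hBB !hAC !hBC.
exact: six_term_identity.
Qed.
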